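(* Let $n=T+1-t$. (i) The value $\tilde{V}_n^2(p_t,\nu_t)$ of the $n$-stage type 2 dual game $\tilde{\Gamma}_n^2(p_t,\nu_t)$ satisfies \[ \tilde{V}_n^2(p_t,\nu_t)=\max_{x\in X,\,u\in U,\,u_{:,0}\in\mathbb{R}^{|L|},\,\tilde{u}\in\mathbb{R}}\ \tilde{u} \] subject to \[ u_{:,0}+\nu_t\geq \tilde{u}\mathbf{1}, \] \[ \sum_{k\in K}{M^{kl}}^Tx_{k,h_1^A,h_1^B}+{u_{l,h_1^A,h_1^B}}^T\mathbf{1} \geq u_{l,0} \mathbf{1},\quad \forall l\in L, \] \[ \sum_{k\in K}{M^{kl}}^Tx_{k,h_{s+1}^A,h_{s+1}^B}+{u_{l,h_{s+1}^A,h_{s+1}^B}}^T\mathbf{1} \geq u_{l,h_{s}^A,h_{s}^B}^{a_{s},b_{s}}\mathbf{1},\quad \forall s=1,\ldots,n-1,\ l\in L,\ h_s^A\in H_s^A,\ h_s^B\in H_s^B, \] where $h_{s+1}^A=(h_s^A,a_s)$, $h_{s+1}^B=(h_s^B,b_s)$ (concatenation), $u_{l,h_n^A,h_n^B}$ is the zero matrix for all $l\in L$, $X$ is the set of player 1's realization plans (vectors satisfying $\mathbf{1}^T x_{k,h_s^A,h_s^B}=x_{k,h_{s-1}^A,h_{s-1}^B}^{a_{s-1}}$ and $x_{k,h_s^A,h_s^B}\geq\mathbf{0}$ for all $s,k,h_s^A,h_s^B$) with $x_{k,h_0^A,h_0^B}^{a_0}=p^k_t$, and $U$ is a real space of appropriate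 dimension. Player 1's security strategy at stage $t$ in the type 2 dual game is \[ \tilde{\sigma}^{*}_t(k,p_t,\nu_t)=\frac{x_{k,h_1^A,h_1^B}^{*}}{p^k_t}, \] where $x^*$ is an optimal solution of this LP. (ii) Similarly, for the type 1 dual game $\tilde{\Gamma}_T^1(\mu,q)$, with $\mu_t$ the regret on player 1's type and $q_t$ the belief on player 2's type at stage $t$, the value $\tilde{V}_n^1(\mu_t,q_t)$ of the $n$-stage type 1 dual game $\tilde{\Gamma}_n^1(\mu_t,q_t)$ satisfies \[ \tilde{V}_n^1(\mu_t,q_t)=\min_{y\in Y,\,w\in W,\,w_{:,0}\in\mathbb{R}^{|K|},\,\tilde{w}\in\mathbb{R}}\ \tilde{w} \] subject to \[ w_{:,0}+\mu_t \leq \tilde{w}\mathbf{1}, \] \[ \sum_{l\in L} M^{kl} y_{l,h_1^A,h_1^B}+w_{k,h_1^A,h_1^B}\mathbf{1} \leq w_{k,0}\mathbf{1},\quad\forall k\in K, \] \[ \sum_{l\in L} M^{kl} y_{l,h_{s+1}^A,h_{s+1}^B}+w_{k,h_{s+1}^A,h_{s+1}^B}\mathbf{1} \leq w_{k,h_{s}^A,h_{s}^B}^{a_{s},b_{s}}\mathbf{1},\quad\forall s=1,\ldots,n-1,\ k\in K,\ h_s^A\in H_s^A,\ h_s^B\in H_s^B, \] where $w_{k,h_n^A,h_n^B}$ is the zero matrix for all $k\in K$, $Y$ is the set of player 2's realization plans (vectors satisfying $\mathbf{1}^T y_{l,h_s^A,h_s^B}=y_{l,h_{s-1}^A,h_{s-1}^B}^{b_{s-1}}$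 and $y_{l,h_s^A,h_s^B}\geq\mathbf{0}$) with $y_{l,h_0^A,h_0^B}^{b_0}=q^l_t$, and $W$ is a real space of appropriate dimension. Player 2's security strategy at stage $t$ in the type 1 dual game is \[ \tilde{\tau}^*_t(l,\mu_t,q_t)=\frac{y_{l,h_1^A,h_1^B}^*}{q^l_t}. \]
   Context: A two-player zero-sum $T$-stage repeated Bayesian game is given by finite type sets $K$ (player 1, maximizer) and $L$ (player 2, minimizer), finite action sets $A,B$, payoff matrices $M^{kl}\in\mathbb{R}^{|A|\times|B|}$ with entries $M^{kl}_{a,b}=M(k,l,a,b)$, and initial type distributions $p\in\Delta(K)$, $q\in\Delta(L)$; types are fixed, actions are announced publicly each stage, and the payoff is $\mathbb{E}\sum_{t=1}^T M(k,l,a_t,b_t)$. History action sequences are $h_s^A\in H_s^A=A^{s-1}$, $h_s^B\in H_s^B=B^{s-1}$. A realization plan of player 1 is $x_{k,h_s^A,h_s^B}^{a_s}=p^k\prod_{r=1}^s\sigma_r^{a_r}(k,h_r^A,h_r^B)$ (vector $x_{k,h_s^A,h_s^B}\in\mathbb{R}^{|A|}$), and of player 2 is $y_{l,h_s^A,h_s^B}^{b_s}=q^l\prod_{r=1}^s\tau_r^{b_r}(l,h_r^A,h_r^B)$; the variables $u_{l,h_s^A,h_s^B}$, $w_{k,h_s^A,h_s^B}$ are $|A|\times|B|$ matrices and $u_{l,0}$, $w_{k,0}$ scalars. In the type 2 dual game $\tilde{\Gamma}_T^2(p,\nu)$ with $\nu\in\mathbb{R}^{|L|}$, player 2 chooses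 his own type $l$ (by a distribution $q$) without informing player 1, player 1's type is drawn from $p$, and player 1's payoff is $\mathbb{E}(\nu^l+\sum_{t=1}^T M(k,l,a_t,b_t))$. In the type 1 dual game $\tilde{\Gamma}_T^1(\mu,q)$ with $\mu\in\mathbb{R}^{|K|}$, player 1 chooses his own type $k$ himself, player 2's type is drawn from $q$, and the payoff is $\mathbb{E}(\mu^k+\sum_{t=1}^T M(k,l,a_t,b_t))$. In the type 2 dual game, $p_t$ is the belief on player 1's type ($p_t^k=P(k\mid l,h_t^A,h_t^B)$, updated by Bayes' rule with $p_1=p$) and $\nu_t$ is the regret on player 2's type ($\nu_{t+1}^l=\nu_t^l+\sum_{k}p_{t+1}^kM^{kl}_{a_t,b_t}$, $\nu_1=\nu$); analogously in the type 1 dual game, $q_t$ is the belief on player 2's type and $\mu_{t+1}^k=\mu_t^k+\sum_l q_{t+1}^lM^{kl}_{a_t,b_t}$, $\mu_1=\mu$. *)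

From HB Require Import structures.
From mathcomp Require Import all_boot all_order all_algebra.
From mathcomp Require Import reals.
Set Implicit Arguments. Unset Strict Implicit. Unset Printing Implicit Defensive.
Import Order.TTheory GRing.Theory Num.Theory.
Local Open Scope ring_scope.

(* Types K (player 1), L (player 2), actions A, B are finTypes;
   payoff M k l a b = M^{kl}_{a,b}.  A public history h_s = (h_s^A, h_s^B) at
   stage s is a pair of sequences of length s-1 (appended on the right with
   [rcons]).  Strategies, realization plans and LP variables are total
   functions on all pairs of sequences; only the relevant histories
   (equal lengths, length < n) are constrained / matter. *)

Definition is_distr (R : realType) (T : finType) (f : T -> R) : Prop :=
  (forall i, 0 <= f i) /\ \sum_(i : T) f i = 1.

(* behavior strategies: sigma k hA hB a = sigma_s^a(k, h_s^A, h_s^B) *)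
Definition is_strat1 (R : realType) (K A B : finType)
  (sigma : K -> seq A -> seq B -> A -> R) : Prop :=
  forall k hA hB, is_distr (sigma k hA hB).
Definition is_strat2 (R : realType) (L A B : finType)
  (tau : L -> seq A -> seq B -> B -> R) : Prop :=
  forall l hA hB, is_distr (tau l hA hB).

Fixpoint contpay (R : realType) (K L A B : finType) (M : K -> L -> A -> B -> R)
  (sigma : K -> seq A -> seq B -> A -> R) (tau : L -> seq A -> seq B -> B -> R)
  (k : K) (l : L) (m : nat) (hA : seq A) (hB : seq B) : R :=
  match m with
  | 0 => 0
  | m'.+1 => \sum_(a : A) \sum_(b : B)
      sigma k hA hB a * tau l hA hB b *
      (M k l a b + contpay M sigma tau k l m' (rcons hA a) (rcons hB b))
  end.

(* payoff of the n-stage type 2 dual game  ~Gamma_n^2(p, nu):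
   player 2 picks q in Delta(L) and tau *)
Definition pay2 (R : realType) (K L A B : finType) (M : K -> L -> A -> B -> R)
  (n : nat) (p : K -> R) (nu : L -> R)
  (sigma : K -> seq A -> seq B -> A -> R)
  (q : L -> R) (tau : L -> seq A -> seq B -> B -> R) : R :=
  \sum_(k : K) \sum_(l : L)
     p k * q l * (nu l + contpay M sigma tau k l n [::] [::]).

(* payoff of the n-stage type 1 dual game ~Gamma_n^1(mu, q):
   player 1 picks p in Delta(K) and sigma *)
Definition pay1 (R : realType) (K L A B : finType) (M : K -> L -> A -> B -> R)
  (n : nat) (mu : K -> R) (q : L -> R)
  (p : K -> R) (sigma : K -> seq A -> seq B -> A -> R)
  (tau : L -> seq A -> seq B -> B -> R) : R :=
  \sum_(k : K) \sum_(l : L)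
     p k * q l * (mu k + contpay M sigma tau k l n [::] [::]).

Definition is_value2 (R : realType) (K L A B : finType)
  (M : K -> L -> A -> B -> R) (n : nat) (p : K -> R) (nu : L -> R) (v : R) :=
  (exists sigma, is_strat1 sigma /\
     forall q tau, is_distr q -> is_strat2 tau -> v <= pay2 M n p nu sigma q tau) /\
  (exists q tau, is_distr q /\ is_strat2 tau /\
     forall sigma, is_strat1 sigma -> pay2 M n p nu sigma q tau <= v).

Definition is_value1 (R : realType) (K L A B : finType)
  (M : K -> L -> A -> B -> R) (n : nat) (mu : K -> R) (q : L -> R) (v : R) :=
  (exists tau, is_strat2 tau /\
     forall p sigma, is_distr p -> is_strat1 sigma -> pay1 M n mu q p sigma tau <= v) /\
  (exists p sigma, is_distr p /\ is_strat1 sigma /\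
     forall tau, is_strat2 tau -> v <= pay1 M n mu q p sigma tau).

Definition security1 (R : realType) (K L A B : finType)
  (M : K -> L -> A -> B -> R) (n : nat) (p : K -> R) (nu : L -> R)
  (sigma : K -> seq A -> seq B -> A -> R) : Prop :=
  is_strat1 sigma /\
  forall v, is_value2 M n p nu v ->
    forall q tau, is_distr q -> is_strat2 tau -> v <= pay2 M n p nu sigma q tau.

Definition security2 (R : realType) (K L A B : finType)
  (M : K -> L -> A -> B -> R) (n : nat) (mu : K -> R) (q : L -> R)
  (tau : L -> seq A -> seq B -> B -> R) : Prop :=
  is_strat2 tau /\
  forall v, is_value1 M n mu q v ->
    forall p sigma, is_distr p -> is_strat1 sigma -> pay1 M n mu q p sigma tau <= v.

(* X: realization plans of player 1, x k hA hB a = x^a_{k,h_s^A,h_s^B},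
   with x^{a_0}_{k,h_0} = p^k *)
Definition realization_plan1 (R : realType) (K A B : finType) (n : nat)
  (p : K -> R) (x : K -> seq A -> seq B -> A -> R) : Prop :=
  (forall k, \sum_(a : A) x k [::] [::] a = p k) /\
  (forall k (hA : seq A) (hB : seq B) a b, size hA = size hB -> ((size hA).+2 <= n)%N ->
     \sum_(a' : A) x k (rcons hA a) (rcons hB b) a' = x k hA hB a) /\
  (forall k (hA : seq A) (hB : seq B) a, size hA = size hB -> (size hA < n)%N ->
     0 <= x k hA hB a).

Definition realization_plan2 (R : realType) (L A B : finType) (n : nat)
  (q : L -> R) (y : L -> seq A -> seq B -> B -> R) : Prop :=
  (forall l, \sum_(b : B) y l [::] [::] b = q l) /\
  (forall l (hA : seq A) (hB : seq B) a b, size hA = size hB -> ((size hA).+2 <= n)%N ->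
     \sum_(b' : B) y l (rcons hA a) (rcons hB b) b' = y l hA hB b) /\
  (forall l (hA : seq A) (hB : seq B) b, size hA = size hB -> (size hA < n)%N ->
     0 <= y l hA hB b).

(* feasibility for the LP of part (i); u l hA hB a b = u^{a,b}_{l,hA,hB},
   u0 l = u_{l,0}, ut = tilde u *)
Definition LP2_feasible (R : realType) (K L A B : finType)
  (M : K -> L -> A -> B -> R) (n : nat) (p : K -> R) (nu : L -> R)
  (x : K -> seq A -> seq B -> A -> R) (u : L -> seq A -> seq B -> A -> B -> R)
  (u0 : L -> R) (ut : R) : Prop :=
  realization_plan1 n p x /\
  (forall l, ut <= u0 l + nu l) /\
  (forall l b, u0 l <=
     \sum_(k : K) \sum_(a : A) M k l a b * x k [::] [::] a
     + \sum_(a : A) u l [::] [::] a b) /\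
  (forall l (hA : seq A) (hB : seq B) a b b', size hA = size hB ->
     ((size hA).+2 <= n)%N ->
     u l hA hB a b <=
       \sum_(k : K) \sum_(a' : A) M k l a' b' * x k (rcons hA a) (rcons hB b) a'
       + \sum_(a' : A) u l (rcons hA a) (rcons hB b) a' b') /\
  (forall l (hA : seq A) (hB : seq B) a b, size hA = size hB ->
     (size hA).+1 = n -> u l hA hB a b = 0).

Definition is_LPmax2 (R : realType) (K L A B : finType)
  (M : K -> L -> A -> B -> R) (n : nat) (p : K -> R) (nu : L -> R) (v : R) :=
  (exists x u u0, LP2_feasible M n p nu x u u0 v) /\
  (forall x u u0 ut, LP2_feasible M n p nu x u u0 ut -> ut <= v).

(* feasibility for the LP of part (ii); w k hA hB a b = w^{a,b}_{k,hA,hB} *)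
Definition LP1_feasible (R : realType) (K L A B : finType)
  (M : K -> L -> A -> B -> R) (n : nat) (mu : K -> R) (q : L -> R)
  (y : L -> seq A -> seq B -> B -> R) (w : K -> seq A -> seq B -> A -> B -> R)
  (w0 : K -> R) (wt : R) : Prop :=
  realization_plan2 n q y /\
  (forall k, w0 k + mu k <= wt) /\
  (forall k a,
     \sum_(l : L) \sum_(b : B) M k l a b * y l [::] [::] b
     + \sum_(b : B) w k [::] [::] a b <= w0 k) /\
  (forall k (hA : seq A) (hB : seq B) a b a', size hA = size hB ->
     ((size hA).+2 <= n)%N ->
     \sum_(l : L) \sum_(b' : B) M k l a' b' * y l (rcons hA a) (rcons hB b) b'
     + \sum_(b' : B) w k (rcons hA a) (rcons hB b) a' b' <= w k hA hB a b) /\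
  (forall k (hA : seq A) (hB : seq B) a b, size hA = size hB ->
     (size hA).+1 = n -> w k hA hB a b = 0).

Definition is_LPmin1 (R : realType) (K L A B : finType)
  (M : K -> L -> A -> B -> R) (n : nat) (mu : K -> R) (q : L -> R) (v : R) :=
  (exists y w w0, LP1_feasible M n mu q y w w0 v) /\
  (forall y w w0 wt, LP1_feasible M n mu q y w w0 wt -> v <= wt).

From HB Require Import structures.
From mathcomp Require Import all_boot all_order all_algebra.
From mathcomp Require Import reals.
From mathcomp Require classical_sets.
From mathcomp Require Import zify ring lra.
Import Order.TTheory GRing.Theory Num.Theory.
Set Implicit Arguments. Unset Strict Implicit. Unset Printing Implicit Defensive.
Local Open Scope ring_scope.

(* The payoff of the dual game is bilinear once the players are described by
   realization plans, the probability [x k h a] that type [k] reaches history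
   [h] and then plays [a] (Kuhn): a behaviour strategy gives a plan by
   multiplying its probabilities along the history, and a plan gives back a
   behaviour strategy by normalization.  Against a plan [x] of player 1, player
   2's best reply is computed backwards, and its continuation values are the
   dual variables [u] of the LP.  So a feasible point of the LP is a plan that
   guarantees [u~], and the plan of an optimal strategy, with its best-reply
   values, is feasible at the value.  The value exists because the matrix game
   between pure strategies has one (minimax theorem, proved from Ville's
   alternative by Fourier-Motzkin elimination) and mixed strategies become
   behaviour strategies through their plans.  Part (ii) is part (i) for the
   game [- M] with the players exchanged. *)

Lemma sumr_delta (R : pzSemiRingType) (I : finType) (i0 : I) (F : I -> R) :
  \sum_i (i == i0)%:R * F i = F i0.
Proof.
rewrite (bigD1 i0) //= eqxx mul1r big1 ?addr0 // => i /negbTE ->; exact: mul0r.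
Qed.

Lemma dirac_distr (R : realType) (I : finType) (i0 : I) :
  is_distr (fun i => (i == i0)%:R : R).
Proof.
split=> [i|]; first by rewrite ler0n.
by under eq_bigr do rewrite -[_%:R]mulr1; rewrite sumr_delta.
Qed.

Lemma normalize_distr (R : realType) (I : finType) (x : I -> R) :
  (forall i, 0 <= x i) -> \sum_i x i != 0 -> is_distr (fun i => x i / \sum_j x j).
Proof.
move=> x_ge0 sx_neq0; split=> [i|]; last by rewrite -mulr_suml divff.
by rewrite divr_ge0 ?sumr_ge0.
Qed.

Lemma convex_ge (R : realType) (I : finType) (t F : I -> R) c :
  is_distr t -> (forall i, c <= F i) -> c <= \sum_i t i * F i.
Proof.
move=> [t_ge0 t1] cF; rewrite -[c]mul1r -t1 mulr_suml.
by apply: ler_sum => i _; apply: ler_wpM2l.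
Qed.

Lemma convex_le (R : realType) (I : finType) (t F : I -> R) c :
  is_distr t -> (forall i, F i <= c) -> \sum_i t i * F i <= c.
Proof.
move=> [t_ge0 t1] Fc; rewrite -[c]mul1r -t1 mulr_suml.
by apply: ler_sum => i _; apply: ler_wpM2l.
Qed.

(** * Minimax theorem for matrix games *)

Lemma finite_lt_bound (R : realFieldType) (I : finType) (f : I -> R) c :
  (forall i, f i < c) -> exists2 m, m < c & forall i, f i <= m.
Proof.
move=> fc; exists (\big[Num.max/(c - 1)]_i f i) => [|i]; last exact: le_bigmax.
by elim/big_rec: _ => [|i m _ mc]; rewrite ?gt_max ?fc ?mc // gtrBl ltr01.
Qed.

(* Take [t] strictly between the largest bound [s q / - a q] of the rows with
   [a q < 0] and the smallest bound [- s p / a p] of the rows with [a p > 0]. *)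
Lemma solve_one_unknown (R : realFieldType) (I : finType) (a s : I -> R) :
  (forall i, 0 <= a i -> s i < 0) ->
  (forall p q, 0 < a p -> a q < 0 -> a p * s q - a q * s p < 0) ->
  exists2 t, 0 <= t & forall i, a i * t + s i < 0.
Proof.
move=> s_neg cross.
pose lo := \big[Num.max/0]_(q | a q < 0) (s q / - a q).
have lo_ge0 : 0 <= lo by rewrite /lo; elim/big_rec: _ => // i x _ hx; rewrite le_max hx orbT.
have lo_ge q : a q < 0 -> s q / - a q <= lo by exact: le_bigmax_cond.
have lo_lt p : 0 < a p -> lo < - s p / a p.
  move=> hp; apply: (big_ind (fun m => m < - s p / a p)).
  - by rewrite divr_gt0 // oppr_gt0 s_neg // ltW.
  - by move=> x y hx hy; rewrite gt_max hx hy.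
  - move=> q hq; rewrite ltr_pdivlMr // mulrAC ltr_pdivrMr ?oppr_gt0 //.
    have := cross p q hp hq; nra.
pose gap := \big[Num.min/1]_(p | 0 < a p) (- s p / a p - lo).
have gap_gt0 : 0 < gap.
  apply: (big_ind (fun m => 0 < m)) => // [x y hx hy|p hp].
    by rewrite lt_min hx hy.
  by rewrite subr_gt0 lo_lt.
have gap_le p : 0 < a p -> gap <= - s p / a p - lo by exact: bigmin_le_cond.
exists (lo + gap / 2) => [|i]; first lra.
case: (ltgtP (a i) 0) => hi.
- have := lo_ge i hi; rewrite ler_pdivrMr ?oppr_gt0 //; nra.
- have : lo + gap / 2 < - s i / a i by have := gap_le i hi; lra.
  rewrite ltr_pdivlMr //; nra.
- by rewrite hi mul0r add0r s_neg ?hi.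
Qed.

Section Ville.
Variables (R : realFieldType) (J : finType).

(* Fourier-Motzkin elimination of the column [j0] of [A]: the admissible new
   rows are the rows [i] with [A i j0 >= 0] and, for [A p j0 > 0 > A q j0],
   the combination of rows [p] and [q] that cancels column [j0]. *)
Definition fm_admissible (I : finType) (A : I -> J -> R) (j0 : J)
    (r : I + I * I) : bool :=
  match r with
  | inl i => 0 <= A i j0
  | inr pq => (0 < A pq.1 j0) && (A pq.2 j0 < 0)
  end.

Definition fm_coef (I : finType) (A : I -> J -> R) (j0 : J)
    (r : I + I * I) (i : I) : R :=
  match r with
  | inl i' => (i == i')%:R
  | inr pq => (i == pq.2)%:R * A pq.1 j0 - (i == pq.1)%:R * A pq.2 j0
  end.

Variables (I : finType) (A : I -> J -> R) (j0 : J).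

Lemma fm_coef_ge0 r i : fm_admissible A j0 r -> 0 <= fm_coef A j0 r i.
Proof.
case: r => [i'|[p q] /andP[hp hq]] /=; first by rewrite ler0n.
by rewrite subr_ge0 (@le_trans _ _ 0) ?mulr_ge0 ?mulr_ge0_le0 ?ler0n ?ltW.
Qed.

Lemma fm_coef_sum r (F : I -> R) :
  \sum_i fm_coef A j0 r i * F i =
  match r with
  | inl i' => F i'
  | inr pq => A pq.1 j0 * F pq.2 - A pq.2 j0 * F pq.1
  end.
Proof.
case: r => [i'|[p q]] /=; first exact: sumr_delta.
under eq_bigr do rewrite mulrBl -!mulrA.
by rewrite sumrB !sumr_delta.
Qed.

Lemma fm_coef_sum_gt0 r : fm_admissible A j0 r -> 0 < \sum_i fm_coef A j0 r i.
Proof.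
move=> hr; have := fm_coef_sum r (fun _ => 1).
under eq_bigr do rewrite mulr1.
move=> ->; case: r hr => [i' _|[p q] /andP[hp hq]] /=; first exact: ltr01.
rewrite !mulr1; lra.
Qed.

Local Notation fm_row := {r : I + I * I | fm_admissible A j0 r}.

Definition fm_matrix (r : fm_row) (j : J) : R := \sum_i fm_coef A j0 (val r) i * A i j.

Lemma fm_primal (S : {set J}) (z : fm_row -> R) :
  (forall r, 0 <= z r) -> 0 < \sum_r z r ->
  (forall j, j \in S :\ j0 -> 0 <= \sum_r z r * fm_matrix r j) ->
  exists x : I -> R, [/\ forall i, 0 <= x i, 0 < \sum_i x i &
    forall j, j \in S -> 0 <= \sum_i x i * A i j].
Proof.
move=> z_ge0 z_gt0 zS; pose c (r : fm_row) := fm_coef A j0 (val r).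
have c_ge0 r i : 0 <= c r i by apply: fm_coef_ge0; exact: valP.
have c_sum_gt0 r : 0 < \sum_i c r i by apply: fm_coef_sum_gt0; exact: valP.
have mixE (F : I -> R) :
    \sum_i (\sum_r z r * c r i) * F i = \sum_r z r * \sum_i c r i * F i.
  under eq_bigr do rewrite mulr_suml.
  rewrite exchange_big; apply: eq_bigr => r _; rewrite mulr_sumr.
  by apply: eq_bigr => i _; rewrite mulrA.
exists (fun i => \sum_r z r * c r i).
split=> [i||j Sj]; first by apply: sumr_ge0 => r _; rewrite mulr_ge0.
  have := mixE (fun=> 1); under eq_bigr do rewrite mulr1.
  under [in X in _ = X -> _]eq_bigr do under eq_bigr do rewrite mulr1.
  move=> ->; have [r zr_gt0] : exists r, 0 < z r.
    apply/existsP; apply: contraTT z_gt0; rewrite negb_exists => /forallP zr.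
    by rewrite -leNgt; apply: sumr_le0 => r _; rewrite leNgt zr.
  rewrite (bigD1 r) //= ltr_wpDr ?sumr_ge0 ?mulr_gt0 // => r' _.
  exact: mulr_ge0 (z_ge0 r') (ltW (c_sum_gt0 r')).
rewrite mixE; case: (eqVneq j j0) => [->|jj0]; last by apply: zS; rewrite in_setD1 jj0.
apply: sumr_ge0 => -[r hr] _; apply: mulr_ge0 => //.
by rewrite /c /= fm_coef_sum; move: hr; case: r => [//|[p q] _]; rewrite mulrC subrr.
Qed.

Lemma fm_dual (S : {set J}) (w : J -> R) : j0 \in S -> (forall j, 0 <= w j) ->
  (forall r, \sum_(j in S :\ j0) fm_matrix r j * w j < 0) ->
  exists2 y : J -> R, forall j, 0 <= y j & forall i, \sum_(j in S) A i j * y j < 0.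
Proof.
move=> Sj0 w_ge0 wS; pose s i := \sum_(j in S :\ j0) A i j * w j.
have wE r : \sum_(j in S :\ j0) fm_matrix r j * w j = \sum_i fm_coef A j0 (val r) i * s i.
  under eq_bigr do rewrite mulr_suml.
  rewrite exchange_big; apply: eq_bigr => i _; rewrite mulr_sumr.
  by apply: eq_bigr => j _; rewrite mulrA.
have [t t_ge0 ht] : exists2 t, 0 <= t & forall i, A i j0 * t + s i < 0.
  apply: solve_one_unknown => [i hi|p q hp hq].
    by have := wS (exist _ (inl i) hi); rewrite wE fm_coef_sum.
  have hpq : fm_admissible A j0 (inr (p, q)) by rewrite /= hp hq.
  by have := wS (exist _ (inr (p, q)) hpq); rewrite wE fm_coef_sum.
exists (fun j => if j == j0 then t else w j) => [j|i]; first by case: ifP.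
rewrite (big_setD1 j0 Sj0) /= eqxx; congr (_ + _ < _): (ht i).
by apply: eq_bigr => j /setD1P[/negbTE ->].
Qed.

End Ville.

Lemma ville (R : realFieldType) (J : finType) (S : {set J}) (I : finType)
    (A : I -> J -> R) :
  (exists x : I -> R, [/\ forall i, 0 <= x i, 0 < \sum_i x i &
      forall j, j \in S -> 0 <= \sum_i x i * A i j])
  \/ (exists2 y : J -> R, forall j, 0 <= y j &
      forall i, \sum_(j in S) A i j * y j < 0).
Proof.
move: {2}#|S| (erefl #|S|) => n; elim: n S I A => [|n IH] S I A hS.
  have -> : S = set0 by apply/eqP; rewrite -cards_eq0 hS.
  case: (pickP (@predT I)) => [i0 _|noI]; last first.
    by right; exists (fun=> 0) => // i; have := noI i.
  left; exists (fun i => (i == i0)%:R); split=> [i||j]; rewrite ?ler0n ?inE //.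
  by under eq_bigr do rewrite -[_%:R]mulr1; rewrite sumr_delta ltr01.
have [j0 Sj0] : exists j0, j0 \in S by apply/set0Pn; rewrite -cards_eq0 hS.
have hS' : #|S :\ j0| = n by move: hS; rewrite (cardsD1 j0) Sj0 add1n => -[].
case: (IH _ _ (@fm_matrix _ _ _ A j0) hS') => [[z [z_ge0 z_gt0 zS]]|[w w_ge0 wS]].
  by left; exact: fm_primal z_ge0 z_gt0 zS.
by right; exact: fm_dual Sj0 w_ge0 wS.
Qed.

Lemma distr_alternative (R : realType) (I J : finType) (G : I -> J -> R) (i0 : I) c :
  (exists2 x, is_distr x & forall j, c <= \sum_i x i * G i j)
  \/ (exists2 y, is_distr y & forall i, \sum_j G i j * y j < c).
Proof.
have setTE (F : J -> R) : \sum_(j in [set: J]) F j = \sum_j F j.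
  by apply: eq_bigl => j; rewrite inE.
case: (ville [set: J] (fun i j => G i j - c)) => [[x [x_ge0 x_gt0 xG]]|[y y_ge0 yG]].
  left; exists (fun i => x i / \sum_i' x i') => [|j].
    by apply: normalize_distr => //; rewrite gt_eqF.
  under eq_bigr do rewrite mulrAC; rewrite -mulr_suml ler_pdivlMr //.
  have := xG j (in_setT j); under eq_bigr do rewrite mulrBr.
  by rewrite sumrB -mulr_suml subr_ge0 mulrC.
have yE i : \sum_j G i j * y j < c * \sum_j y j.
  have := yG i; rewrite setTE; under eq_bigr do rewrite mulrBl.
  by rewrite sumrB -mulr_sumr subr_lt0.
have y_gt0 : 0 < \sum_j y j.
  rewrite lt_neqAle sumr_ge0 // andbT; apply: contraTneq (yE i0) => /esym y0.
  rewrite y0 mulr0 -leNgt big1 // => j _.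
  by rewrite (psumr_eq0P (fun j _ => y_ge0 j) y0) ?mulr0.
right; exists (fun j => y j / \sum_j' y j') => [|i].
  by apply: normalize_distr => //; rewrite gt_eqF.
by under eq_bigr do rewrite mulrA; rewrite -mulr_suml ltr_pdivrMr.
Qed.

Lemma bilinear_exchange (R : realType) (I J : finType) (G : I -> J -> R)
    (x : I -> R) (y : J -> R) :
  \sum_j y j * \sum_i x i * G i j = \sum_i x i * \sum_j G i j * y j.
Proof.
under eq_bigr do rewrite mulr_sumr; rewrite exchange_big.
by apply: eq_bigr => i _; rewrite mulr_sumr; apply: eq_bigr => j _; ring.
Qed.

(* The value is the supremum of the levels player 1 can guarantee. *)
Theorem minimax (R : realType) (I J : finType) (G : I -> J -> R) (i0 : I) (j0 : J) :
  exists v (x : I -> R) (y : J -> R), [/\ is_distr x, is_distr y,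
    forall j, v <= \sum_i x i * G i j & forall i, \sum_j G i j * y j <= v].
Proof.
pose E lam := exists2 x, is_distr x & forall j, lam <= \sum_i x i * G i j.
have E_ub lam : E lam -> lam <= \big[Num.max/0]_i G i j0.
  by case=> x xd /(_ j0) /le_trans; apply; apply: convex_le => // i; exact: le_bigmax.
have E_lam0 : E (\big[Num.min/0]_j G i0 j).
  exists (fun i => (i == i0)%:R) => [|j]; first exact: dirac_distr.
  by rewrite sumr_delta; exact: bigmin_le.
have E_sup : classical_sets.has_sup E.
  by split; [exists (\big[Num.min/0]_j G i0 j) | exists (\big[Num.max/0]_i G i j0)].
pose v := sup E.
have [x xd xv] : exists2 x, is_distr x & forall j, v <= \sum_i x i * G i j.
  case: (distr_alternative G i0 v) => // -[y yd yv].
  have [m mv ym] := finite_lt_bound yv.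
  suff : v <= m by rewrite leNgt mv.
  apply: ge_sup => [|lam [x' xd' x'G]]; first by exists (\big[Num.min/0]_j G i0 j).
  apply: le_trans (convex_ge yd x'G) _.
  by rewrite bilinear_exchange; apply: convex_le.
have [y yd yv] : exists2 y, is_distr y & forall i, \sum_j G i j * y j <= v.
  have := distr_alternative (fun j i => - G i j) j0 (- v).
  case=> [[y yd yv]|[x' xd' x'v]].
    exists y => // i; have := yv i.
    by under eq_bigr do rewrite mulrN mulrC; rewrite sumrN lerN2.
  have := finite_lt_bound (f := fun j => - \sum_i x' i * G i j) (c := - v).
  case=> [j|m mv x'm].
    by have := x'v j; under eq_bigr do rewrite mulNr mulrC; rewrite sumrN.
  suff : - m <= v by rewrite lerNl leNgt mv.
  apply: sup_upper_bound => //; exists x' => // j; rewrite lerNl; exact: x'm.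
by exists v, x, y.
Qed.

(** * Realization plans and best replies *)

Section RealizationPlans.
Variables (R : realType) (K L A B : finType) (M : K -> L -> A -> B -> R).

Local Notation strat1 := (K -> seq A -> seq B -> A -> R).
Local Notation strat2 := (L -> seq A -> seq B -> B -> R).

Lemma contpay_ext (sigma sigma' : strat1) (tau tau' : strat2) k l N :
  (forall hA hB, size hA = size hB -> (size hA < N)%N ->
     sigma k hA hB =1 sigma' k hA hB /\ tau l hA hB =1 tau' l hA hB) ->
  forall m hA hB, size hA = size hB -> (size hA + m <= N)%N ->
  contpay M sigma tau k l m hA hB = contpay M sigma' tau' k l m hA hB.
Proof.
move=> eq_st; elim=> [//|m IH] hA hB hs hN /=.
have /(eq_st _ _ hs)[eq_s eq_t] : (size hA < N)%N by lia.
apply: eq_bigr => a _; apply: eq_bigr => b _.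
rewrite eq_s eq_t IH // !size_rcons ?hs //; lia.
Qed.

Lemma pay2_ext n p nu (sigma sigma' : strat1) q (tau tau' : strat2) :
  (forall k l, p k != 0 -> q l != 0 ->
     forall hA hB, size hA = size hB -> (size hA < n)%N ->
     sigma k hA hB =1 sigma' k hA hB /\ tau l hA hB =1 tau' l hA hB) ->
  pay2 M n p nu sigma q tau = pay2 M n p nu sigma' q tau'.
Proof.
move=> eq_st; apply: eq_bigr => k _; apply: eq_bigr => l _.
have [->|pk] := eqVneq (p k) 0; first by rewrite !mul0r.
have [->|ql] := eqVneq (q l) 0; first by rewrite !mulr0 !mul0r.
by rewrite (contpay_ext (eq_st k l pk ql)).
Qed.

Lemma pay2_dirac n p nu (sigma : strat1) (tau : strat2) l :
  is_distr p ->
  pay2 M n p nu sigma (fun l' => (l' == l)%:R) tau =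
  nu l + \sum_k p k * contpay M sigma tau k l n [::] [::].
Proof.
move=> [_ p1]; rewrite /pay2 exchange_big /= (bigD1 l) //= eqxx.
rewrite [X in _ + X]big1 => [|l' /negbTE ->].
  under eq_bigr do rewrite mulr1n mulr1 mulrDr.
  by rewrite addr0 big_split /= -mulr_suml p1 mul1r.
by apply: big1 => k _; rewrite mulr0 mul0r.
Qed.

Lemma pay2_mix_types n p nu (sigma : strat1) q (tau : strat2) :
  is_distr p ->
  pay2 M n p nu sigma q tau =
  \sum_l q l * pay2 M n p nu sigma (fun l' => (l' == l)%:R) tau.
Proof.
move=> pd; under [RHS]eq_bigr do rewrite pay2_dirac //.
rewrite /pay2 exchange_big; apply: eq_bigr => l _ /=.
rewrite mulrDr mulr_sumr -[in RHS](mulr1 (q l * nu l)) -pd.2 mulr_sumr -big_split /=.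
by apply: eq_bigr => k _; ring.
Qed.

(* Unlike [contpay], this is linear in player 1's choice [x]; that linearity
   is what turns the dual game into a linear program. *)
Fixpoint plan_payoff (x : strat1) (tau : strat2) (l : L) (m : nat)
    (hA : seq A) (hB : seq B) : R :=
  if m is m'.+1 then
    \sum_b tau l hA hB b * (\sum_k \sum_a M k l a b * x k hA hB a +
      \sum_a plan_payoff x tau l m' (rcons hA a) (rcons hB b))
  else 0.

Lemma plan_payoff_mix (I : finType) (c : I -> R) (xs : I -> strat1) tau l m hA hB :
  plan_payoff (fun k hA hB a => \sum_i c i * xs i k hA hB a) tau l m hA hB =
  \sum_i c i * plan_payoff (xs i) tau l m hA hB.
Proof.
elim: m hA hB => [|m IH] hA hB /=; first by rewrite big1 // => i _; rewrite mulr0.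
under [RHS]eq_bigr do rewrite mulr_sumr; rewrite [RHS]exchange_big /=.
apply: eq_bigr => b _; under [RHS]eq_bigr do rewrite mulrCA; rewrite -mulr_sumr.
congr (_ * _); under [RHS]eq_bigr do rewrite mulrDr; rewrite big_split /=.
congr (_ + _); last first.
  under eq_bigr do rewrite IH.
  by rewrite exchange_big; under [RHS]eq_bigr do rewrite mulr_sumr.
under [RHS]eq_bigr do rewrite mulr_sumr; rewrite [RHS]exchange_big; apply: eq_bigr => k _ /=.
under [RHS]eq_bigr do rewrite mulr_sumr; rewrite [RHS]exchange_big; apply: eq_bigr => a _ /=.
by rewrite mulr_sumr; apply: eq_bigr => i _; ring.
Qed.

(* Kuhn's identity: if [w] is the weight with which each history is reached
   and [x = w * sigma], then the [w]-weighted continuation payoff is the payoff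
   of the realization plan [x]. *)
Lemma sum_contpay_plan (w : K -> seq A -> seq B -> R) (x sigma : strat1)
    (tau : strat2) l N :
  (forall k hA hB a, size hA = size hB -> (size hA < N)%N ->
     w k hA hB * sigma k hA hB a = x k hA hB a) ->
  (forall k hA hB a b, size hA = size hB -> ((size hA).+2 <= N)%N ->
     w k (rcons hA a) (rcons hB b) = x k hA hB a) ->
  forall m hA hB, size hA = size hB -> (size hA + m <= N)%N ->
  \sum_k w k hA hB * contpay M sigma tau k l m hA hB = plan_payoff x tau l m hA hB.
Proof.
move=> w_sigma w_next; elim=> [|m IH] hA hB hs hN /=.
  by rewrite big1 // => k _; rewrite mulr0.
pose c k a b := contpay M sigma tau k l m (rcons hA a) (rcons hB b).
have x_next k a b : x k hA hB a * c k a b = w k (rcons hA a) (rcons hB b) * c k a b.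
  rewrite /c; clear c; case: m IH hN => [|m'] _ hN; first by rewrite /= !mulr0.
  by rewrite (w_next k hA hB a b hs) //; lia.
have stage k a b : w k hA hB * (sigma k hA hB a * tau l hA hB b * (M k l a b + c k a b)) =
    tau l hA hB b * (M k l a b * x k hA hB a + w k (rcons hA a) (rcons hB b) * c k a b).
  by rewrite -x_next -(w_sigma k hA hB a hs); [ring | lia].
transitivity (\sum_b \sum_k \sum_a tau l hA hB b *
    (M k l a b * x k hA hB a + w k (rcons hA a) (rcons hB b) * c k a b)).
  rewrite [RHS]exchange_big; apply: eq_bigr => k _ /=.
  rewrite mulr_sumr [RHS]exchange_big; apply: eq_bigr => a _ /=.
  by rewrite mulr_sumr; apply: eq_bigr => b _; rewrite stage.
apply: eq_bigr => b _.
have -> : \sum_a plan_payoff x tau l m (rcons hA a) (rcons hB b) =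
    \sum_k \sum_a w k (rcons hA a) (rcons hB b) * c k a b.
  rewrite exchange_big; apply: eq_bigr => a _ /=.
  by rewrite IH // ?size_rcons ?hs //; lia.
rewrite mulrDr !mulr_sumr -big_split; apply: eq_bigr => k _ /=.
by rewrite !mulr_sumr -big_split; apply: eq_bigr => a _; rewrite mulrDr.
Qed.

Fixpoint reach_prob (s : seq A -> seq B -> A -> R) (pA : seq A) (pB : seq B)
    (hA : seq A) (hB : seq B) : R :=
  match hA, hB with
  | a :: hA', b :: hB' => s pA pB a * reach_prob s (rcons pA a) (rcons pB b) hA' hB'
  | _, _ => 1
  end.

Lemma reach_prob_rcons s pA pB hA hB a b : size hA = size hB ->
  reach_prob s pA pB (rcons hA a) (rcons hB b) =
  reach_prob s pA pB hA hB * s (pA ++ hA) (pB ++ hB) a.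
Proof.
elim: hA hB pA pB => [|a' hA IH] [|b' hB] // pA pB /=; first by rewrite !cats0 mul1r mulr1.
by case=> hs; rewrite IH // -mulrA !cat_rcons.
Qed.

Lemma reach_prob_ge0 s pA pB hA hB :
  (forall pA pB a, 0 <= s pA pB a) -> 0 <= reach_prob s pA pB hA hB.
Proof.
move=> s_ge0; elim: hA hB pA pB => [|a hA IH] [|b hB] pA pB //=.
exact: mulr_ge0.
Qed.

Definition plan_of (p : K -> R) (sigma : strat1) : strat1 :=
  fun k hA hB a => p k * reach_prob (sigma k) [::] [::] hA hB * sigma k hA hB a.

Lemma plan_of_realization n p sigma :
  (forall k, 0 <= p k) -> is_strat1 sigma -> realization_plan1 n p (plan_of p sigma).
Proof.
move=> p_ge0 hsigma; rewrite /plan_of.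
split; [|split] => [k|k hA hB a b hs _|k hA hB a _ _].
- by rewrite -mulr_sumr (hsigma _ _ _).2 /= !mulr1.
- by rewrite -mulr_sumr (hsigma _ _ _).2 mulr1 reach_prob_rcons // mulrA.
- by rewrite !mulr_ge0 ?reach_prob_ge0 // => *; exact: (hsigma _ _ _).1.
Qed.

Lemma sum_contpay_plan_of n p sigma tau l :
  \sum_k p k * contpay M sigma tau k l n [::] [::] =
  plan_payoff (plan_of p sigma) tau l n [::] [::].
Proof.
pose w k hA hB := p k * reach_prob (sigma k) [::] [::] hA hB.
have w_next k hA hB a b : size hA = size hB -> ((size hA).+2 <= n)%N ->
    w k (rcons hA a) (rcons hB b) = plan_of p sigma k hA hB a.
  by move=> hs _; rewrite /w reach_prob_rcons // mulrA.
rewrite -(sum_contpay_plan (w := w) tau l (N := n) (fun _ _ _ _ _ _ => erefl) w_next) //.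
by apply: eq_bigr => k _; rewrite /w /= mulr1.
Qed.

Variable a0 : A.

(* [a0] is a junk default at histories that the plan does not reach. *)
Definition strat_of_plan (x : strat1) : strat1 := fun k hA hB =>
  if [forall a, 0 <= x k hA hB a] && (\sum_a x k hA hB a != 0)
  then fun a => x k hA hB a / \sum_a' x k hA hB a'
  else fun a => (a == a0)%:R.

Lemma strat_of_plan_strat x : is_strat1 (strat_of_plan x).
Proof.
move=> k hA hB; rewrite /strat_of_plan.
case: ifP => [/andP[/forallP x_ge0 sx_neq0]|_]; last exact: dirac_distr.
exact: normalize_distr.
Qed.

Lemma sum_mul_strat_of_plan x k hA hB a : (forall a, 0 <= x k hA hB a) ->
  (\sum_a' x k hA hB a') * strat_of_plan x k hA hB a = x k hA hB a.
Proof.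
move=> x_ge0; rewrite /strat_of_plan.
have -> /= : [forall a, 0 <= x k hA hB a] by apply/forallP.
have [sx0|sx_neq0] := eqVneq (\sum_a' x k hA hB a') 0; last by rewrite mulrC divfK.
by rewrite sx0 mul0r (psumr_eq0P (fun a _ => x_ge0 a) sx0).
Qed.

Lemma strat_of_plan_root n p x k a : (0 < n)%N -> realization_plan1 n p x ->
  p k != 0 -> strat_of_plan x k [::] [::] a = x k [::] [::] a / p k.
Proof.
move=> n_gt0 [x_root [_ x_ge0]] pk_neq0; rewrite /strat_of_plan x_root pk_neq0 andbT.
by case: forallP => // -[] a'; exact: x_ge0.
Qed.

Lemma sum_contpay_strat_of_plan n p x tau l : realization_plan1 n p x ->
  \sum_k p k * contpay M (strat_of_plan x) tau k l n [::] [::] =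
  plan_payoff x tau l n [::] [::].
Proof.
move=> [x_root [x_next x_ge0]]; under eq_bigr do rewrite -x_root.
have w_sigma k hA hB a : size hA = size hB -> (size hA < n)%N ->
    (\sum_a' x k hA hB a') * strat_of_plan x k hA hB a = x k hA hB a.
  by move=> hs hn; apply: sum_mul_strat_of_plan => a'; exact: x_ge0.
by rewrite -(sum_contpay_plan tau l (N := n) w_sigma x_next).
Qed.

Lemma realization_plan1_mix n p (I : finType) (c : I -> R) (ps : I -> K -> R)
    (xs : I -> strat1) :
  (forall i, 0 <= c i) -> (forall i, realization_plan1 n (ps i) (xs i)) ->
  (forall k, \sum_i c i * ps i k = p k) ->
  realization_plan1 n p (fun k hA hB a => \sum_i c i * xs i k hA hB a).
Proof.
move=> c_ge0 xs_plan cps; split; [|split] => [k|k hA hB a b hs hn|k hA hB a hs hn].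
- by rewrite exchange_big -cps; apply: eq_bigr => i _; rewrite -mulr_sumr (xs_plan i).1.
- by rewrite exchange_big; apply: eq_bigr => i _; rewrite -mulr_sumr (xs_plan i).2.1.
- by apply: sumr_ge0 => i _; rewrite mulr_ge0 // (xs_plan i).2.2.
Qed.

Lemma pay2_mix1 n p nu (I : finType) (c : I -> R) (sigmas : I -> strat1) l tau :
  is_distr c -> is_distr p -> (forall i, is_strat1 (sigmas i)) ->
  pay2 M n p nu
    (strat_of_plan (fun k hA hB a => \sum_i c i * plan_of p (sigmas i) k hA hB a))
    (fun l' => (l' == l)%:R) tau =
  \sum_i c i * pay2 M n p nu (sigmas i) (fun l' => (l' == l)%:R) tau.
Proof.
move=> cd pd sigmas_strat.
rewrite pay2_dirac // sum_contpay_strat_of_plan; last first.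
  apply: realization_plan1_mix => [i|i|k]; first exact: cd.1.
    exact: plan_of_realization pd.1 (sigmas_strat i).
  by rewrite -mulr_suml cd.2 mul1r.
under [RHS]eq_bigr do rewrite pay2_dirac // sum_contpay_plan_of mulrDr.
by rewrite big_split /= -mulr_suml cd.2 mul1r plan_payoff_mix.
Qed.

Variable b0 : B.

Fixpoint reply_value (x : strat1) (l : L) (m : nat) (hA : seq A) (hB : seq B) : R :=
  if m is m'.+1 then
    let cost b := \sum_k \sum_a M k l a b * x k hA hB a +
                  \sum_a reply_value x l m' (rcons hA a) (rcons hB b) in
    cost [arg min_(b < b0) cost b]%O
  else 0.

Definition reply_cost x l m hA hB b : R :=
  \sum_k \sum_a M k l a b * x k hA hB a +
  \sum_a reply_value x l m (rcons hA a) (rcons hB b).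

Definition best_reply n x : strat2 := fun l hA hB b =>
  (b == [arg min_(b' < b0) reply_cost x l (n - (size hA).+1) hA hB b']%O)%:R.

Lemma reply_valueE x l m hA hB :
  reply_value x l m.+1 hA hB =
  reply_cost x l m hA hB [arg min_(b < b0) reply_cost x l m hA hB b]%O.
Proof. by []. Qed.

Lemma reply_value_le_cost x l m hA hB b :
  reply_value x l m.+1 hA hB <= reply_cost x l m hA hB b.
Proof. by rewrite reply_valueE; case: arg_minP => // b' _; apply. Qed.

Lemma best_reply_strat n x : is_strat2 (best_reply n x).
Proof. by move=> l hA hB; exact: dirac_distr. Qed.

Lemma reply_value_le_plan_payoff x tau l m hA hB : is_strat2 tau ->
  reply_value x l m hA hB <= plan_payoff x tau l m hA hB.
Proof.
move=> htau; elim: m hA hB => [//|m IH] hA hB.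
rewrite [X in _ <= X]/=; apply: convex_ge (htau l hA hB) _ => b.
apply: le_trans (reply_value_le_cost x l m hA hB b) _.
by rewrite /reply_cost lerD2l; apply: ler_sum => a _; exact: IH.
Qed.

Lemma plan_payoff_best_reply n x l m hA hB : (size hA + m)%N = n ->
  plan_payoff x (best_reply n x) l m hA hB = reply_value x l m hA hB.
Proof.
elim: m hA hB => [//|m IH] hA hB hm.
rewrite reply_valueE /= /best_reply (_ : n - (size hA).+1 = m)%N; last by lia.
rewrite sumr_delta /reply_cost; congr (_ + _).
by apply: eq_bigr => a _; apply: IH; rewrite size_rcons; lia.
Qed.

Lemma pay2_best_reply2 n p nu x l tau :
  is_distr p -> realization_plan1 n p x -> is_strat2 tau ->
  pay2 M n p nu (strat_of_plan x) (fun l' => (l' == l)%:R) (best_reply n x) <=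
  pay2 M n p nu (strat_of_plan x) (fun l' => (l' == l)%:R) tau.
Proof.
move=> pd hx htau; rewrite !pay2_dirac // !sum_contpay_strat_of_plan // lerD2l.
by rewrite plan_payoff_best_reply // reply_value_le_plan_payoff.
Qed.

Lemma LP2_u_le_plan_payoff n p nu x u u0 ut tau l hA hB a b :
  LP2_feasible M n p nu x u u0 ut -> is_strat2 tau ->
  size hA = size hB -> (size hA < n)%N ->
  u l hA hB a b <= plan_payoff x tau l (n - (size hA).+1) (rcons hA a) (rcons hB b).
Proof.
move=> [_ [_ [_ [u_step u_last]]]] htau; move Dm : (n - (size hA).+1)%N => m.
elim: m hA hB a b Dm => [|m IH] hA hB a b Dm hs hn; first by rewrite u_last //; lia.
apply: convex_ge (htau l _ _) _ => b'.
apply: le_trans (u_step l hA hB a b b' hs _) _; first lia.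
rewrite lerD2l; apply: ler_sum => a' _; apply: IH; rewrite ?size_rcons ?hs //; lia.
Qed.

Lemma LP2_u0_le_plan_payoff n p nu x u u0 ut tau l :
  (0 < n)%N -> LP2_feasible M n p nu x u u0 ut -> is_strat2 tau ->
  u0 l <= plan_payoff x tau l n [::] [::].
Proof.
case: n => // n _ hLP htau; apply: convex_ge (htau l _ _) _ => b.
apply: le_trans (hLP.2.2.1 l b) _; rewrite lerD2l; apply: ler_sum => a _.
have := LP2_u_le_plan_payoff l a b (hA := [::]) (hB := [::]) hLP htau erefl.
by rewrite subSS subn0; apply.
Qed.

Lemma LP2_le_pay2 n p nu x u u0 ut q tau :
  (0 < n)%N -> is_distr p -> LP2_feasible M n p nu x u u0 ut ->
  is_distr q -> is_strat2 tau -> ut <= pay2 M n p nu (strat_of_plan x) q tau.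
Proof.
move=> n_gt0 pd hLP qd htau; rewrite pay2_mix_types //; apply: convex_ge => // l.
rewrite pay2_dirac // sum_contpay_strat_of_plan; last exact: hLP.1.
apply: le_trans (hLP.2.1 l) _; rewrite addrC lerD2l.
exact: LP2_u0_le_plan_payoff hLP htau.
Qed.

End RealizationPlans.

(** * Exchanging the players *)

Definition flip_hist (T X A B C : Type) (f : X -> seq A -> seq B -> C -> T) :
  X -> seq B -> seq A -> C -> T := fun x hB hA c => f x hA hB c.

(* The type 1 dual game is the type 2 dual game of [swap_game M] with the roles
   of the players exchanged. *)
Definition swap_game (R : realType) (K L A B : finType) (M : K -> L -> A -> B -> R) :
  L -> K -> B -> A -> R := fun l k b a => - M k l a b.

Section Swap.
Variables (R : realType) (K L A B : finType) (M : K -> L -> A -> B -> R).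

Local Notation strat1 := (K -> seq A -> seq B -> A -> R).
Local Notation strat2 := (L -> seq A -> seq B -> B -> R).

Lemma contpay_swap (sigma : strat1) (tau : strat2) k l m hA hB :
  contpay M sigma tau k l m hA hB =
  - contpay (swap_game M) (flip_hist tau) (flip_hist sigma) l k m hB hA.
Proof.
elim: m hA hB => [|m IH] hA hB /=; first by rewrite oppr0.
rewrite exchange_big -sumrN; apply: eq_bigr => b _; rewrite -sumrN.
by apply: eq_bigr => a _; rewrite IH /flip_hist /swap_game; ring.
Qed.

Lemma pay1_swap n mu q p (sigma : strat1) (tau : strat2) :
  pay1 M n mu q p sigma tau =
  - pay2 (swap_game M) n q (fun k => - mu k) (flip_hist tau) p (flip_hist sigma).
Proof.
rewrite /pay1 /pay2 exchange_big -sumrN; apply: eq_bigr => l _; rewrite -sumrN.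
by apply: eq_bigr => k _; rewrite contpay_swap; ring.
Qed.

Lemma pay2_swapE n p nu (sigma : strat1) q (tau : strat2) :
  pay2 M n p nu sigma q tau =
  \sum_k p k * (\sum_l q l * nu l -
    \sum_l q l * contpay (swap_game M) (flip_hist tau) (flip_hist sigma) l k n [::] [::]).
Proof.
apply: eq_bigr => k _; rewrite -sumrB mulr_sumr; apply: eq_bigr => l _.
by rewrite contpay_swap; ring.
Qed.

Variables (a0 : A) (b0 : B).

(* Realization plans of player 2 are those of player 1 in [swap_game M]. *)
Lemma pay2_plan2 n p nu (sigma : strat1) q y : realization_plan1 n q y ->
  pay2 M n p nu sigma q (flip_hist (strat_of_plan b0 y)) =
  \sum_k p k * (\sum_l q l * nu l -
    plan_payoff (swap_game M) y (flip_hist sigma) k n [::] [::]).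
Proof.
move=> hy; rewrite pay2_swapE; apply: eq_bigr => k _.
by rewrite (sum_contpay_strat_of_plan (swap_game M) b0 (flip_hist sigma) k hy).
Qed.

Lemma pay2_best_reply1 n p nu (sigma : strat1) q y :
  is_distr p -> realization_plan1 n q y -> is_strat1 sigma ->
  pay2 M n p nu sigma q (flip_hist (strat_of_plan b0 y)) <=
  pay2 M n p nu (flip_hist (best_reply (swap_game M) a0 n y)) q
    (flip_hist (strat_of_plan b0 y)).
Proof.
move=> pd hy hsigma; rewrite !pay2_plan2 //; apply: ler_sum => k _.
rewrite ler_wpM2l ?pd.1 // lerD2l lerN2 plan_payoff_best_reply //.
by apply: reply_value_le_plan_payoff => l' hB hA; exact: hsigma.
Qed.

Definition mixed_plan2 (I : finType) (c : I -> R) (ls : I -> L) (taus : I -> strat2) :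
  L -> seq B -> seq A -> B -> R := fun l hB hA b =>
  \sum_i c i * plan_of (fun l' => (l' == ls i)%:R) (flip_hist (taus i)) l hB hA b.

Lemma mixed_plan2_realization n (I : finType) (c : I -> R) ls (taus : I -> strat2) :
  (forall i, 0 <= c i) -> (forall i, is_strat2 (taus i)) ->
  realization_plan1 n (fun l => \sum_i c i * (l == ls i)%:R) (mixed_plan2 c ls taus).
Proof.
move=> c_ge0 taus_strat; apply: realization_plan1_mix => // i.
by apply: plan_of_realization => [l|l hB hA]; [rewrite ler0n | exact: taus_strat].
Qed.

Lemma pay2_mix2 n p nu (sigma : strat1) (I : finType) (c : I -> R) ls
    (taus : I -> strat2) :
  is_distr c -> (forall i, is_strat2 (taus i)) ->
  pay2 M n p nu sigma (fun l => \sum_i c i * (l == ls i)%:R)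
    (flip_hist (strat_of_plan b0 (mixed_plan2 c ls taus))) =
  \sum_i c i * pay2 M n p nu sigma (fun l => (l == ls i)%:R) (taus i).
Proof.
move=> cd taus_strat.
rewrite pay2_plan2; last exact: mixed_plan2_realization cd.1 taus_strat.
have nuE : \sum_l (\sum_i c i * (l == ls i)%:R) * nu l = \sum_i c i * nu (ls i).
  under eq_bigr do rewrite mulr_suml; rewrite exchange_big; apply: eq_bigr => i _.
  by under eq_bigr do rewrite -mulrA; rewrite -mulr_sumr sumr_delta.
have payE k :
    plan_payoff (swap_game M) (mixed_plan2 c ls taus) (flip_hist sigma) k n [::] [::] =
    \sum_i c i *
      contpay (swap_game M) (flip_hist (taus i)) (flip_hist sigma) (ls i) k n [::] [::].
  rewrite /mixed_plan2 plan_payoff_mix; apply: eq_bigr => i _.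
  by rewrite -sum_contpay_plan_of sumr_delta.
under eq_bigr do rewrite nuE payE -sumrB mulr_sumr.
under [RHS]eq_bigr do rewrite pay2_swapE sumr_delta mulr_sumr.
rewrite [RHS]exchange_big; apply: eq_bigr => k _ /=; apply: eq_bigr => i _.
by rewrite sumr_delta; ring.
Qed.

End Swap.

(** * The value and the linear programs *)

Section HistCode.
Variables (A B : finType) (n : nat) (a0 : A) (b0 : B).

(* Histories of length at most [n], coded by their length and padded arrays,
   so that pure strategies form a finite type. *)
Definition hist_code := ('I_n.+1 * ({ffun 'I_n.+1 -> A} * {ffun 'I_n.+1 -> B}))%type.

Definition encode_hist (hA : seq A) (hB : seq B) : hist_code :=
  (inord (size hA),
   ([ffun i : 'I_n.+1 => nth a0 hA i], [ffun i : 'I_n.+1 => nth b0 hB i])).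

Definition decode_histA (c : hist_code) : seq A := mkseq (fun i => c.2.1 (inord i)) c.1.
Definition decode_histB (c : hist_code) : seq B := mkseq (fun i => c.2.2 (inord i)) c.1.

Lemma decode_encode_hist hA hB : size hA = size hB -> (size hA <= n)%N ->
  decode_histA (encode_hist hA hB) = hA /\ decode_histB (encode_hist hA hB) = hB.
Proof.
move=> hs hn; rewrite /decode_histA /decode_histB /= inordK; last by lia.
split; [rewrite -[RHS](mkseq_nth a0) | rewrite hs -[RHS](mkseq_nth b0)];
  apply/eq_in_map => i /[!mem_iota] /andP[_ hi]; rewrite ffunE inordK //; lia.
Qed.

Variables (R : realType) (K L : finType).

Definition pure1 (s : {ffun K * hist_code -> A}) : K -> seq A -> seq B -> A -> R :=
  fun k hA hB a => (a == s (k, encode_hist hA hB))%:R.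

Definition pure2 (t : {ffun hist_code -> B}) : L -> seq A -> seq B -> B -> R :=
  fun l hA hB b => (b == t (encode_hist hA hB))%:R.

Lemma pure1_strat s : is_strat1 (pure1 s).
Proof. by move=> k hA hB; exact: dirac_distr. Qed.

Lemma pure2_strat t : is_strat2 (pure2 t).
Proof. by move=> l hA hB; exact: dirac_distr. Qed.

Lemma pure1_code (f : K -> seq A -> seq B -> A) k hA hB :
  size hA = size hB -> (size hA < n)%N ->
  pure1 [ffun kc => f kc.1 (decode_histA kc.2) (decode_histB kc.2)] k hA hB =1
  fun a => (a == f k hA hB)%:R.
Proof.
move=> hs hn a; rewrite /pure1 ffunE /=.
by have [-> ->] := decode_encode_hist hs (ltnW hn).
Qed.

Lemma pure2_code (g : seq A -> seq B -> B) (l : L) hA hB :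
  size hA = size hB -> (size hA < n)%N ->
  pure2 [ffun c => g (decode_histA c) (decode_histB c)] l hA hB =1
  fun b => (b == g hA hB)%:R.
Proof.
move=> hs hn b; rewrite /pure2 ffunE.
by have [-> ->] := decode_encode_hist hs (ltnW hn).
Qed.

End HistCode.

Section Value.
Variables (R : realType) (K L A B : finType) (M : K -> L -> A -> B -> R).
Variables (a0 : A) (b0 : B) (n : nat) (p : K -> R) (nu : L -> R).
Hypothesis pd : is_distr p.

Local Notation pure1 := (@pure1 A B n a0 b0 R K).
Local Notation pure2 := (@pure2 A B n a0 b0 R L).

(* The matrix game between pure strategies; a pure strategy of player 2
   includes the choice of his type. *)
Definition pure_pay (s : {ffun K * hist_code A B n -> A})
    (lt : L * {ffun hist_code A B n -> B}) : R :=
  pay2 M n p nu (pure1 s) (fun l => (l == lt.1)%:R) (pure2 lt.2).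

Lemma value2_lower v (xw : {ffun K * hist_code A B n -> A} -> R) :
  is_distr xw -> (forall lt, v <= \sum_s xw s * pure_pay s lt) ->
  exists sigma, is_strat1 sigma /\ forall q tau, is_distr q -> is_strat2 tau ->
    v <= pay2 M n p nu sigma q tau.
Proof.
move=> xd xv.
pose x k hA hB a := \sum_s xw s * plan_of p (pure1 s) k hA hB a.
have hx : realization_plan1 n p x.
  apply: realization_plan1_mix => [s|s|k]; first exact: xd.1.
    exact: plan_of_realization pd.1 (pure1_strat _ _ _ _).
  by rewrite -mulr_suml xd.2 mul1r.
exists (strat_of_plan a0 x); split => [|q tau qd htau]; first exact: strat_of_plan_strat.
rewrite pay2_mix_types //; apply: convex_ge => // l.
apply: le_trans (pay2_best_reply2 M a0 b0 nu l pd hx htau).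
pose g hA hB := [arg min_(b < b0) reply_cost M b0 x l (n - (size hA).+1) hA hB b]%O.
pose t := [ffun c : hist_code A B n => g (decode_histA c) (decode_histB c)].
rewrite (@pay2_ext _ _ _ _ _ M n p nu _ (strat_of_plan a0 x) _ _ (pure2 t)); last first.
  move=> k l' _; have [->|] := eqVneq l' l; last by rewrite eqxx.
  by move=> _ hA hB hs hn; split=> [a //|b]; rewrite (@pure2_code A B n a0 b0 R L g).
by rewrite pay2_mix1 //; [exact: xv (l, t) | move=> s; exact: pure1_strat].
Qed.

Lemma value2_upper v (yw : L * {ffun hist_code A B n -> B} -> R) :
  is_distr yw -> (forall s, \sum_lt pure_pay s lt * yw lt <= v) ->
  exists q tau, is_distr q /\ is_strat2 tau /\
    forall sigma, is_strat1 sigma -> pay2 M n p nu sigma q tau <= v.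
Proof.
move=> yd yv.
pose y := mixed_plan2 yw (fun lt => lt.1) (fun lt => pure2 lt.2).
pose q l := \sum_lt yw lt * (l == lt.1)%:R.
have hy : realization_plan1 n q y.
  by apply: mixed_plan2_realization => [|lt]; [exact: yd.1 | exact: pure2_strat].
exists q, (flip_hist (strat_of_plan b0 y)); split; [|split].
- split=> [l|]; first by apply: sumr_ge0 => lt _; rewrite mulr_ge0 ?ler0n ?yd.1.
  rewrite exchange_big -[RHS]yd.2; apply: eq_bigr => lt _.
  by rewrite -mulr_sumr (dirac_distr R lt.1).2 mulr1.
- by move=> l hA hB; exact: strat_of_plan_strat.
move=> sigma hsigma; apply: le_trans (pay2_best_reply1 M a0 b0 nu pd hy hsigma) _.
pose f k hA hB :=
  [arg min_(a < a0) reply_cost (swap_game M) a0 y k (n - (size hB).+1) hB hA a]%O.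
pose s := [ffun kc : K * hist_code A B n =>
  f kc.1 (decode_histA kc.2) (decode_histB kc.2)].
rewrite (@pay2_ext _ _ _ _ _ M n p nu _ (pure1 s) _ _ (flip_hist (strat_of_plan b0 y))).
  rewrite pay2_mix2 => [|//|lt]; last exact: pure2_strat.
  by under eq_bigr do rewrite mulrC; exact: yv.
move=> k l _ _ hA hB hs hn.
by split=> [a|b //]; rewrite (@pure1_code A B n a0 b0 R K f).
Qed.

Lemma value2_exists (l0 : L) : exists v, is_value2 M n p nu v.
Proof.
have [v [xw [yw [xd yd xv yv]]]] := minimax pure_pay [ffun=> a0] (l0, [ffun=> b0]).
by exists v; split; [exact: value2_lower xd xv | exact: value2_upper yd yv].
Qed.

(* The plan of player 1's optimal strategy, with player 2's best-reply values
   as the dual variables, is feasible at the value. *)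
Lemma value2_LP2_feasible v : (0 < n)%N -> is_value2 M n p nu v ->
  exists x u u0, LP2_feasible M n p nu x u u0 v.
Proof.
move=> n_gt0 [[sigma [hsigma sigma_v]] _]; pose x := plan_of p sigma.
exists x, (fun l hA hB a b =>
  reply_value M b0 x l (n - (size hA).+1) (rcons hA a) (rcons hB b)).
exists (fun l => reply_value M b0 x l n [::] [::]).
split; first exact: plan_of_realization pd.1 hsigma.
split; [|split; [|split]].
- move=> l; have := sigma_v _ _ (dirac_distr R l) (best_reply_strat M b0 n x).
  by rewrite pay2_dirac // sum_contpay_plan_of plan_payoff_best_reply // addrC.
- move=> l b; have := reply_value_le_cost M b0 x l n.-1 [::] [::] b.
  by rewrite prednK // /reply_cost subn1.
- move=> l hA hB a b b' hs hn.
  rewrite (_ : n - (size hA).+1 = (n - (size hA).+2).+1)%N; last by lia.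
  apply: le_trans (reply_value_le_cost M b0 x l _ (rcons hA a) (rcons hB b) b') _.
  by rewrite size_rcons.
- by move=> l hA hB a b hs hn; rewrite (_ : n - (size hA).+1 = 0)%N //; lia.
Qed.

Lemma LP2_le_value v x u u0 ut : (0 < n)%N -> is_value2 M n p nu v ->
  LP2_feasible M n p nu x u u0 ut -> ut <= v.
Proof.
move=> n_gt0 [_ [q [tau [qd [htau tau_v]]]]] hx.
exact: le_trans (LP2_le_pay2 a0 n_gt0 pd hx qd htau) (tau_v _ (strat_of_plan_strat a0 x)).
Qed.

Lemma value2_is_LPmax2 v : (0 < n)%N -> is_value2 M n p nu v -> is_LPmax2 M n p nu v.
Proof.
move=> n_gt0 hv; split; first exact: value2_LP2_feasible.
by move=> x u u0 ut; exact: LP2_le_value.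
Qed.

End Value.

Lemma value2_unique (R : realType) (K L A B : finType) (M : K -> L -> A -> B -> R)
    n p nu v v' :
  is_value2 M n p nu v -> is_value2 M n p nu v' -> v = v'.
Proof.
move=> [[s1 [hs1 g1]] [q1 [t1 [hq1 [ht1 g1']]]]] [[s2 [hs2 g2]] [q2 [t2 [hq2 [ht2 g2']]]]].
apply/eqP; rewrite eq_le (le_trans (g1 q2 t2 hq2 ht2) (g2' s1 hs1)).
exact: le_trans (g2 q1 t1 hq1 ht1) (g1' s2 hs2).
Qed.

Theorem dual_game2_LP (R : realType) (K L A B : finType) (M : K -> L -> A -> B -> R)
    n p nu (a0 : A) (b0 : B) (l0 : L) :
  (0 < n)%N -> is_distr p ->
  (exists v, is_value2 M n p nu v /\ is_LPmax2 M n p nu v) /\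
  (forall x u u0 ut, LP2_feasible M n p nu x u u0 ut -> is_LPmax2 M n p nu ut ->
     exists sigma, security1 M n p nu sigma /\
       forall k, p k != 0 -> forall a, sigma k [::] [::] a = x k [::] [::] a / p k).
Proof.
move=> n_gt0 pd; have [v hv] := value2_exists M a0 b0 n nu pd l0.
have hLP := value2_is_LPmax2 a0 b0 pd n_gt0 hv.
split=> [|x u u0 ut hx [_ ut_max]]; first by exists v.
have ut_v : ut = v.
  have [[x' [u' [u0' hx']]] _] := hLP.
  by apply/eqP; rewrite eq_le (LP2_le_value a0 pd n_gt0 hv hx) (ut_max _ _ _ _ hx').
exists (strat_of_plan a0 x); split=> [|k pk a]; last exact: strat_of_plan_root n_gt0 hx.1 pk.
split=> [|v' hv' q tau qd htau]; first exact: strat_of_plan_strat.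
by rewrite -(value2_unique hv hv') -ut_v (LP2_le_pay2 a0 n_gt0 pd hx qd htau).
Qed.

Section DualGame1.
Variables (R : realType) (K L A B : finType) (M : K -> L -> A -> B -> R).
Variables (n : nat) (mu : K -> R) (q : L -> R).

Lemma is_value1_swap v :
  is_value2 (swap_game M) n q (fun k => - mu k) v -> is_value1 M n mu q (- v).
Proof.
move=> [[s [hs s_v]] [p [t [pd [ht t_v]]]]]; split.
  exists (flip_hist s); split=> [l hA hB|p' sigma pd' hsigma]; first exact: hs.
  by rewrite pay1_swap lerN2; apply: s_v => // k hB hA; exact: hsigma.
exists p, (flip_hist t); split=> //; split=> [k hA hB|tau htau]; first exact: ht.
by rewrite pay1_swap lerN2; apply: t_v => l hB hA; exact: htau.
Qed.

Lemma is_value2_swap v :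
  is_value1 M n mu q v -> is_value2 (swap_game M) n q (fun k => - mu k) (- v).
Proof.
move=> [[t [ht t_v]] [p [s [pd [hs s_v]]]]]; split.
  exists (flip_hist t); split=> [l hB hA|p' tau pd' htau]; first exact: ht.
  by have := t_v p' (flip_hist tau) pd' (fun k hA hB => htau k hB hA); rewrite pay1_swap lerNl.
exists p, (flip_hist s); split=> //; split=> [k hB hA|sigma hsigma]; first exact: hs.
by have := s_v (flip_hist sigma) (fun l hA hB => hsigma l hB hA); rewrite pay1_swap lerNr.
Qed.

Lemma realization_plan2_flip (y : L -> seq A -> seq B -> B -> R) :
  realization_plan2 n q y <-> realization_plan1 n q (flip_hist y).
Proof.
split=> -[y_root [y_next y_ge0]]; split=> //; split.
- by move=> l hB hA b a hs hn; apply: y_next; rewrite -hs.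
- by move=> l hB hA b hs hn; apply: y_ge0; rewrite -hs.
- by move=> l hA hB a b hs hn; apply: y_next; rewrite -hs.
- by move=> l hA hB b hs hn; apply: y_ge0; rewrite -hs.
Qed.

Lemma swap_stage_payoff (x : L -> seq B -> seq A -> B -> R) k hB hA a :
  \sum_l \sum_b swap_game M l k b a * x l hB hA b =
  - \sum_l \sum_b M k l a b * x l hB hA b.
Proof.
rewrite -sumrN; apply: eq_bigr => l _; rewrite -sumrN.
by apply: eq_bigr => b _; rewrite mulNr.
Qed.

Lemma LP1_feasible_swap x u u0 ut :
  LP2_feasible (swap_game M) n q (fun k => - mu k) x u u0 ut ->
  LP1_feasible M n mu q (flip_hist x) (fun k hA hB a b => - u k hB hA b a)
    (fun k => - u0 k) (- ut).
Proof.
move=> [hx [ut_le [u0_le [u_step u_last]]]].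
split; first exact/realization_plan2_flip.
split=> [k|]; first by have := ut_le k; lra.
split=> [k a|]; first by have := u0_le k a; rewrite swap_stage_payoff /flip_hist sumrN; lra.
split=> [k hA hB a b a' hs hn|k hA hB a b hs hn].
  have := u_step k hB hA b a a' (esym hs).
  by rewrite -hs swap_stage_payoff /flip_hist sumrN => /(_ hn); lra.
by rewrite u_last ?oppr0 // -hs.
Qed.

Lemma LP2_feasible_swap y w w0 wt :
  LP1_feasible M n mu q y w w0 wt ->
  LP2_feasible (swap_game M) n q (fun k => - mu k) (flip_hist y)
    (fun k hB hA b a => - w k hA hB a b) (fun k => - w0 k) (- wt).
Proof.
move=> [hy [w0_le [w_root [w_step w_last]]]].
split; first exact/realization_plan2_flip.
split=> [k|]; first by have := w0_le k; lra.
split=> [k a|]; first by have := w_root k a; rewrite swap_stage_payoff /flip_hist sumrN; lra.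
split=> [k hB hA b a a' hs hn|k hB hA b a hs hn].
  have := w_step k hA hB a b a' (esym hs).
  by rewrite -hs swap_stage_payoff /flip_hist sumrN => /(_ hn); lra.
by rewrite w_last ?oppr0 // -hs.
Qed.

End DualGame1.

Theorem dual_game1_LP (R : realType) (K L A B : finType) (M : K -> L -> A -> B -> R)
    n mu q (a0 : A) (b0 : B) (k0 : K) :
  (0 < n)%N -> is_distr q ->
  (exists v, is_value1 M n mu q v /\ is_LPmin1 M n mu q v) /\
  (forall y w w0 wt, LP1_feasible M n mu q y w w0 wt -> is_LPmin1 M n mu q wt ->
     exists tau, security2 M n mu q tau /\
       forall l, q l != 0 -> forall b, tau l [::] [::] b = y l [::] [::] b / q l).
Proof.
move=> n_gt0 qd.
have [[v [hv _]] hsec] := dual_game2_LP (swap_game M) (fun k => - mu k) b0 a0 k0 n_gt0 qd.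
have LPmin v' : is_LPmax2 (swap_game M) n q (fun k => - mu k) v' -> is_LPmin1 M n mu q (- v').
  move=> [[x [u [u0 hx]]] v'_max]; split; first by do 3 eexists; exact: LP1_feasible_swap hx.
  by move=> y w w0 wt /LP2_feasible_swap /v'_max; rewrite lerNl.
split=> [|y w w0 wt hy [_ wt_min]].
  by exists (- v); split; [exact: is_value1_swap | apply: LPmin; exact: value2_is_LPmax2].
have hmax : is_LPmax2 (swap_game M) n q (fun k => - mu k) (- wt).
  split=> [|x u u0 ut /LP1_feasible_swap /wt_min]; last by rewrite lerNr.
  by do 3 eexists; exact: LP2_feasible_swap hy.
have [sigma [[hsigma sigma_sec] sigma_root]] := hsec _ _ _ _ (LP2_feasible_swap hy) hmax.
exists (flip_hist sigma); split=> [|l ql b]; last exact: sigma_root.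
split=> [l hA hB|v' hv' p sigma' pd hsigma']; first exact: hsigma.
have := sigma_sec _ (is_value2_swap hv') p (flip_hist sigma') pd
  (fun k hB hA => hsigma' k hA hB).
by rewrite pay1_swap lerNl.
Qed.

Lemma distr_card_gt0 (R : realType) (I : finType) (p : I -> R) :
  is_distr p -> (0 < #|I|)%N.
Proof.
move=> [_ p1]; case: (pickP (@predT I)) => [i _|noI]; first by rewrite (cardD1 i).
by move: p1; rewrite big_pred0 // => /eqP; rewrite eq_sym oner_eq0.
Qed.

Theorem theorem2 (R : realType) (K L A B : finType) (M : K -> L -> A -> B -> R)
  (T t : nat) (p_t : K -> R) (nu_t : L -> R) (mu_t : K -> R) (q_t : L -> R) :
  (0 < #|A|)%N -> (0 < #|B|)%N -> (1 <= t <= T)%N ->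
  is_distr p_t -> is_distr q_t ->
  let n := (T + 1 - t)%N in
  (* (i) type 2 dual game *)
  ((exists v, is_value2 M n p_t nu_t v /\ is_LPmax2 M n p_t nu_t v) /\
   (forall x u u0 ut, LP2_feasible M n p_t nu_t x u u0 ut ->
      is_LPmax2 M n p_t nu_t ut ->
      exists sigma, security1 M n p_t nu_t sigma /\
        forall k, p_t k != 0 -> forall a,
          sigma k [::] [::] a = x k [::] [::] a / p_t k)) /\
  (* (ii) type 1 dual game *)
  ((exists v, is_value1 M n mu_t q_t v /\ is_LPmin1 M n mu_t q_t v) /\
   (forall y w w0 wt, LP1_feasible M n mu_t q_t y w w0 wt ->
      is_LPmin1 M n mu_t q_t wt ->
      exists tau, security2 M n mu_t q_t tau /\
        forall l, q_t l != 0 -> forall b,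
          tau l [::] [::] b = y l [::] [::] b / q_t l)).
Proof.
move=> /card_gt0P[a0 _] /card_gt0P[b0 _] ht pd qd n.
have n_gt0 : (0 < n)%N by rewrite /n; lia.
have /card_gt0P[k0 _] := distr_card_gt0 pd.
have /card_gt0P[l0 _] := distr_card_gt0 qd.
split; [exact: dual_game2_LP a0 b0 l0 n_gt0 pd | exact: dual_game1_LP a0 b0 k0 n_gt0 qd].
Qed.
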